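(* For the Thue-Morse word $t$, \[\limsup_{n\to\infty}\frac{PPL_t(n)}{\ln n}=\frac{3}{4\ln 2},\qquad \liminf_{n\to\infty}\frac{PPL_t(n)}{\ln n}=0.\]
   Context: The Thue-Morse word $t=t[1]t[2]\cdots=abbabaabbaababba\cdots$ is the fixed point starting with $a$ of the morphism $a\mapsto abba,\ b\mapsto baab$. A palindrome is a word $p=p[1]\cdots p[n]$ with $p[i]=p[n-i+1]$ for all $i$. $PPL_t(n)$ is the minimal number of nonempty palindromes whose concatenation equals the prefix of $t$ of length $n$. *)

From Stdlib Require Import Reals.
From Coquelicot Require Import Coquelicot.
From mathcomp Require Import all_boot.

Set Implicit Arguments.
Unset Strict Implicit.
Unset Printing Implicit Defensive.
Local Open Scope nat_scope.

(* Letters: a = false, b = true. *)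
Definition tm_morph (x : bool) : seq bool := [:: x; ~~ x; ~~ x; x].

Fixpoint tm_iter (k : nat) : seq bool :=
  match k with
  | 0 => [:: false]
  | k'.+1 => flatten (map tm_morph (tm_iter k'))
  end.

(* The prefix of length n of the Thue-Morse word t: since each tm_iter k is
   a prefix of tm_iter k.+1 and size (tm_iter n) = 4^n >= n, this is the
   prefix of length n of the fixed point. *)
Definition tm_prefix (n : nat) : seq bool := take n (tm_iter n).

Definition palindrome (p : seq bool) : bool := rev p == p.

Fixpoint pal_fact (k : nat) (w : seq bool) : bool :=
  match k with
  | 0 => w == [::]
  | k'.+1 => has (fun i => palindrome (take i w) && pal_fact k' (drop i w))
                 (iota 1 (size w))
  end.

Lemma pal_fact_exists (w : seq bool) : exists k, pal_fact k w.
Proof.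
exists (size w); elim: w => [|x w IH] //.
rewrite [size _]/= [pal_fact _ _]/=.
rewrite take0 drop0 IH andbT; apply/orP; left; exact: eqxx.
Qed.

Definition ppl (w : seq bool) : nat := ex_minn (pal_fact_exists w).

Definition PPL_t (n : nat) : nat := ppl (tm_prefix n).

(* The morphism maps palindromes to palindromes, so a palindromic factorization
   of [t[0,m)] lifts to one of [t[0,4m)].  Completing or trimming by at most
   three letters gives, for [n = 4m + r],
     PPL_t(n) <= min (PPL_t(m) + c_r, PPL_t(m+1) + d_r),
   [c = (0,1,2,2)], [d = (1,2,2,1)].  Equality holds because the right-hand side
   grows by at most 1 across any palindrome of [t]: such a palindrome has length
   at most 3, or is centred at a multiple of 4 and is the image of a palindrome
   of [t], or is centred at [2 mod 4] and has length at most 12.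
   The recursion yields [PPL_t(n) + PPL_t(n+1) <= 3k + 1] for [n < 4^k], hence
   the upper bound [(3/2) log_4 n + O(1)]; [PPL_t(4^k) <= 1] gives the liminf;
   and along [n_(k+1) = 16 n_k + 6] the value [PPL_t] grows by 3 while [log_4]
   grows by 2, which attains the limsup. *)

From Stdlib Require Import Reals Lia Lra.
From mathcomp Require Import all_boot zify.
From Coquelicot Require Import Coquelicot.

Set Implicit Arguments.
Unset Strict Implicit.
Unset Printing Implicit Defensive.
Local Open Scope nat_scope.

Section WordFactorizations.

Variable w : nat -> bool.

Definition seg a b := mkseq (fun i => w (a + i)) (b - a).

Definition palseg a b : Prop := forall q, a <= q < b -> w q = w (a + b - 1 - q).

Lemma size_seg a b : size (seg a b) = b - a.
Proof. exact: size_mkseq. Qed.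

Lemma take_seg a b i : i <= b - a -> take i (seg a b) = seg a (a + i).
Proof.
move=> hi; apply: (@eq_from_nth _ false).
  by rewrite size_take !size_seg; case: ifP; lia.
move=> j; rewrite size_take size_seg => hj.
have hji : j < i by move: hj; case: ifP; lia.
by rewrite nth_take // !nth_mkseq //; lia.
Qed.

Lemma drop_seg a b i : drop i (seg a b) = seg (a + i) b.
Proof.
apply: (@eq_from_nth _ false); first by rewrite size_drop !size_seg; lia.
move=> j; rewrite size_drop size_seg => hj.
by rewrite nth_drop !nth_mkseq ?addnA //; lia.
Qed.

Lemma palsegP a b : reflect (palseg a b) (palindrome (seg a b)).
Proof.
apply: (iffP eqP) => [hp q hq | hp].
  have hi : q - a < size (seg a b) by rewrite size_seg; lia.
  have := congr1 (nth false ^~ (q - a)) hp.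
  rewrite nth_rev // size_seg !nth_mkseq; try lia.
  have -> : a + (q - a) = q by lia.
  by have -> : a + (b - a - (q - a).+1) = a + b - 1 - q by lia.
apply: (@eq_from_nth _ false); first by rewrite size_rev.
move=> i; rewrite size_rev size_seg => hi.
rewrite nth_rev ?size_seg // !nth_mkseq; try lia.
by rewrite (hp (a + i)); [congr w | ]; lia.
Qed.

Lemma palseg_sym a b q q' : palseg a b -> a <= q < b -> q + q' = a + b - 1 -> w q = w q'.
Proof. by move=> hp hq hs; rewrite hp //; congr w; lia. Qed.

Lemma palseg_half a b :
  (forall q, a <= q -> 2 * q < a + b - 1 -> w q = w (a + b - 1 - q)) -> palseg a b.
Proof.
move=> half q hq.
have [lo|hi] := ltnP (2 * q) (a + b - 1); first by apply: half; lia.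
have [lo'|hi'] := ltnP (2 * (a + b - 1 - q)) (a + b - 1).
  by rewrite (half _ _ lo'); [congr w | ]; lia.
by have -> : a + b - 1 - q = q by lia.
Qed.

Lemma palseg_shrink a b k : palseg a b -> palseg (a + k) (b - k).
Proof. by move=> hp q hq; rewrite hp; [congr w | ]; lia. Qed.

Lemma palseg_letter a : palseg a a.+1.
Proof. by move=> q hq; rewrite (_ : q = a); [congr w | ]; lia. Qed.

Fixpoint palsplit (k a b : nat) : Prop :=
  if k is k'.+1 then exists c, [/\ a < c, c <= b, palseg a c & palsplit k' c b]
  else a = b.

Lemma palsplit_le k a b : palsplit k a b -> a <= b.
Proof.
elim: k a => [|k IH] a /=; first by move->.
by case=> c [ac cb _ /IH]; lia.
Qed.

Lemma pal_fact_segP k a b : a <= b -> pal_fact k (seg a b) <-> palsplit k a b.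
Proof.
elim: k a => [|k IH] a ab /=.
  split=> [/eqP /(congr1 size)|->]; last by rewrite /seg subnn.
  by rewrite size_seg /=; lia.
split.
  case/hasP => i; rewrite mem_iota size_seg => hi /andP [hp hr].
  exists (a + i); split; try lia.
    by apply/palsegP; rewrite -(take_seg (b := b)) //; lia.
  by apply/IH; [lia | rewrite -drop_seg].
case=> c [ac cb hp hr]; apply/hasP; exists (c - a); first by rewrite mem_iota size_seg; lia.
rewrite take_seg ?drop_seg; last lia.
have -> : a + (c - a) = c by lia.
by apply/andP; split; [apply/palsegP | apply/IH].
Qed.

Lemma palsplit_cat k l a b c : palsplit k a b -> palsplit l b c -> palsplit (k + l) a c.
Proof.
elim: k a => [|k IH] a /=; first by move->.
case=> d [ad db hp hr] hl; exists d; split=> //; last exact: IH.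
by have := palsplit_le hl; lia.
Qed.

Lemma palsplit1 a b : a < b -> palseg a b -> palsplit 1 a b.
Proof. by move=> ab hp; exists b. Qed.

Lemma palsplit_last k a b :
  palsplit k.+1 a b -> exists c, [/\ c < b, palsplit k a c & palseg c b].
Proof.
elim: k a => [|k IH] a [c [ac cb hp hr]].
  by rewrite /= in hr; subst c; exists a.
have [d [db hd hp']] := IH _ hr; exists d; split=> //.
by exists c; split=> //; have := palsplit_le hd; lia.
Qed.

Definition prefix_ppl n := ppl (seg 0 n).

Lemma prefix_ppl_split n : palsplit (prefix_ppl n) 0 n.
Proof. by rewrite /prefix_ppl /ppl; case: ex_minnP => k /(pal_fact_segP _ (leq0n n)). Qed.

Lemma prefix_ppl_min k n : palsplit k 0 n -> prefix_ppl n <= k.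
Proof.
rewrite /prefix_ppl /ppl; case: ex_minnP => m _ hmin hk.
exact/hmin/(pal_fact_segP _ (leq0n n)).
Qed.

Lemma prefix_ppl0 : prefix_ppl 0 = 0.
Proof. by apply/eqP; rewrite -leqn0; apply: prefix_ppl_min. Qed.

Lemma prefix_ppl_palseg a b : a <= b -> palseg a b -> prefix_ppl b <= prefix_ppl a + 1.
Proof.
rewrite leq_eqVlt => /orP [/eqP <- _|ab hp]; first lia.
by apply/prefix_ppl_min/(palsplit_cat (prefix_ppl_split a))/palsplit1.
Qed.

Lemma prefix_pplS n : prefix_ppl n.+1 <= prefix_ppl n + 1.
Proof. exact/prefix_ppl_palseg/palseg_letter. Qed.

Lemma prefix_ppl_last n :
  0 < n -> exists c, [/\ c < n, prefix_ppl c < prefix_ppl n & palseg c n].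
Proof.
move=> n_gt0; have := prefix_ppl_split n; case e: (prefix_ppl n) => [|k].
  by move=> /= n0; lia.
case/palsplit_last => c [cn /prefix_ppl_min hc hp]; exists c; split=> //; lia.
Qed.

Lemma prefix_ppl_pred n : prefix_ppl n <= prefix_ppl n.+1 + 1.
Proof.
have [c [cn hc hp]] := prefix_ppl_last (ltn0Sn n).
have [c_n|ne_cn] := eqVneq c n; first by subst c; lia.
have := palseg_shrink (k := 1) hp; rewrite addn1 subn1 /= => hp'.
have := prefix_pplS c; have := prefix_ppl_palseg (_ : c.+1 <= n) hp'; lia.
Qed.

End WordFactorizations.

Lemma size_flatten_tm_morph s : size (flatten (map tm_morph s)) = 4 * size s.
Proof. by elim: s => [|x s IH] //=; rewrite IH; lia. Qed.

Lemma size_tm_iter k : size (tm_iter k) = 4 ^ k.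
Proof. by elim: k => [|k IH] //=; rewrite size_flatten_tm_morph IH expnS. Qed.

Lemma nth_flatten_tm_morph s i j : j < 4 -> i < size s ->
  nth false (flatten (map tm_morph s)) (4 * i + j) = nth false (tm_morph (nth false s i)) j.
Proof.
move=> j_lt4; elim: s i => [|x s IH] [|i] // i_lt;
  change (flatten _) with (tm_morph x ++ flatten (map tm_morph s)); rewrite nth_cat.
  by rewrite muln0 add0n j_lt4.
rewrite ifF /=; last lia.
by rewrite (_ : 4 * i.+1 + j - 4 = 4 * i + j) ?IH //; lia.
Qed.

Lemma tm_iterS_prefix k : exists r, tm_iter k.+1 = tm_iter k ++ r.
Proof.
elim: k => [|k [r IH]]; first by exists [:: true; true; false].
exists (flatten (map tm_morph r)).
change (tm_iter k.+2) with (flatten (map tm_morph (tm_iter k.+1))).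
by rewrite {1}IH map_cat flatten_cat.
Qed.

Lemma nth_tm_iter_le k k' i : k <= k' -> i < 4 ^ k ->
  nth false (tm_iter k') i = nth false (tm_iter k) i.
Proof.
move=> le_kk' i_lt; elim: k' le_kk' => [|k' IH]; first by rewrite leqn0 => /eqP ->.
rewrite leq_eqVlt => /orP [/eqP -> //|lt_kk'].
have [r ->] := tm_iterS_prefix k'.
rewrite nth_cat size_tm_iter ifT; first exact: IH.
by apply: (leq_trans i_lt); rewrite leq_exp2l.
Qed.

Definition tm i := nth false (tm_iter i) i.

Lemma nth_tm_iter k i : i < 4 ^ k -> nth false (tm_iter k) i = tm i.
Proof.
move=> i_lt; rewrite /tm -(@nth_tm_iter_le k (maxn k i)) ?leq_maxl //.
by rewrite -(@nth_tm_iter_le i (maxn k i)) ?leq_maxr // ltn_expl.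
Qed.

Lemma tm_4adic i j : j < 4 -> tm (4 * i + j) = nth false (tm_morph (tm i)) j.
Proof.
move=> j_lt4; have i_lt := @ltn_expl 4 i isT.
rewrite -(@nth_tm_iter i.+1); last by rewrite expnS; lia.
by rewrite /= nth_flatten_tm_morph // size_tm_iter.
Qed.

Lemma tm_4n i : tm (4 * i) = tm i.
Proof. by rewrite -[4 * i]addn0 tm_4adic. Qed.

Lemma tm_4n1 i : tm (4 * i + 1) = ~~ tm i.
Proof. by rewrite tm_4adic. Qed.

Lemma tm_4n2 i : tm (4 * i + 2) = ~~ tm i.
Proof. by rewrite tm_4adic. Qed.

Lemma tm_4n3 i : tm (4 * i + 3) = tm i.
Proof. by rewrite tm_4adic. Qed.

Lemma tm_prefixE n : tm_prefix n = seg tm 0 n.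
Proof.
have n_lt := @ltn_expl 4 n isT.
apply: (@eq_from_nth _ false); first by rewrite size_take size_tm_iter n_lt size_seg subn0.
move=> i; rewrite size_take size_tm_iter n_lt => i_lt.
by rewrite nth_take // nth_mkseq ?subn0 // nth_tm_iter //; lia.
Qed.

Local Notation ppl_tm := (prefix_ppl tm).

Lemma PPL_tE n : PPL_t n = ppl_tm n.
Proof. by rewrite /PPL_t tm_prefixE. Qed.

Lemma palseg_morph a b : palseg tm a b -> palseg tm (4 * a) (4 * b).
Proof.
have mirror Q Q' j : j < 4 -> tm Q = tm Q' -> tm (4 * Q + j) = tm (4 * Q' + (3 - j)).
  case: j => [|[|[|[|j]]]] // _ eqQ.
  - by rewrite addn0 tm_4n tm_4n3 eqQ.
  - by rewrite tm_4n1 tm_4n2 eqQ.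
  - by rewrite tm_4n2 tm_4n1 eqQ.
  - by rewrite tm_4n3 subnn addn0 tm_4n eqQ.
move=> hp q hq.
rewrite {1}(divn_eq q 4) mulnC.
rewrite (_ : 4 * a + 4 * b - 1 - q = 4 * (a + b - 1 - q %/ 4) + (3 - q %% 4)); last lia.
by apply: mirror; [rewrite ltn_mod | apply: hp; lia].
Qed.

Lemma palsplit_morph k a b : palsplit tm k a b -> palsplit tm k (4 * a) (4 * b).
Proof.
elim: k a => [|k IH] a /=; first by move->.
case=> c [ac cb hp hr]; exists (4 * c); split; try lia.
  exact: palseg_morph.
exact: IH.
Qed.

Lemma palseg_lift x y s : s < 4 -> palseg tm (4 * x + s) (4 * y - s) -> palseg tm x y.
Proof.
move=> s_lt4 hp; apply: palseg_half => q xq q_half.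
have := palseg_sym (q := 4 * q + 3) (q' := 4 * (x + y - 1 - q)) hp.
by rewrite tm_4n3 tm_4n; apply; lia.
Qed.

Lemma no_palseg5 q : ~ palseg tm q (q + 5).
Proof.
move=> hp.
have e04 : tm q = tm (q + 4) by apply: (palseg_sym hp); lia.
have e13 : tm (q + 1) = tm (q + 3) by apply: (palseg_sym hp); lia.
move: e04 e13; rewrite (divn_eq q 4) mulnC.
have : q %% 4 < 4 by rewrite ltn_mod.
case: (q %% 4) => [|[|[|[|j]]]] // _; set Q := q %/ 4.
- rewrite addn0 tm_4n tm_4n1 tm_4n3 (_ : 4 * Q + 4 = 4 * Q.+1) ?tm_4n; last lia.
  by case: (tm Q).
- rewrite tm_4n1 (_ : 4 * Q + 1 + 1 = 4 * Q + 2); last lia.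
  rewrite tm_4n2 (_ : 4 * Q + 1 + 4 = 4 * Q.+1 + 1); last lia.
  rewrite (_ : 4 * Q + 1 + 3 = 4 * Q.+1); last lia.
  by rewrite tm_4n1 tm_4n; case: (tm Q); case: (tm Q.+1).
- rewrite tm_4n2 (_ : 4 * Q + 2 + 1 = 4 * Q + 3); last lia.
  rewrite tm_4n3 (_ : 4 * Q + 2 + 4 = 4 * Q.+1 + 2); last lia.
  rewrite (_ : 4 * Q + 2 + 3 = 4 * Q.+1 + 1); last lia.
  by rewrite tm_4n1 tm_4n2; case: (tm Q); case: (tm Q.+1).
- rewrite (_ : 4 * Q + 3 + 1 = 4 * Q.+1); last lia.
  rewrite (_ : 4 * Q + 3 + 3 = 4 * Q.+1 + 2); last lia.
  by rewrite tm_4n tm_4n2; case: (tm Q.+1).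
Qed.

Lemma ppl_tm_4n_le m : ppl_tm (4 * m) <= ppl_tm m.
Proof. by apply: prefix_ppl_min; have := palsplit_morph (prefix_ppl_split tm m). Qed.

Lemma palseg_4n1_4n3 m : palseg tm (4 * m + 1) (4 * m + 3).
Proof.
apply: palseg_half => q mq q_half; have -> : q = 4 * m + 1 by lia.
by rewrite (_ : 4 * m + 1 + (4 * m + 3) - 1 - (4 * m + 1) = 4 * m + 2) ?tm_4n1 ?tm_4n2; lia.
Qed.

Lemma ppl_tm_le_lower_block m :
  [/\ ppl_tm (4 * m + 1) <= ppl_tm m + 1, ppl_tm (4 * m + 2) <= ppl_tm m + 2
    & ppl_tm (4 * m + 3) <= ppl_tm m + 2].
Proof.
have f0 := ppl_tm_4n_le m.
have f1 : ppl_tm (4 * m + 1) <= ppl_tm (4 * m) + 1 by rewrite addn1 prefix_pplS.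
have f2 : ppl_tm (4 * m + 2) <= ppl_tm (4 * m + 1) + 1 by rewrite addnS prefix_pplS.
have f3 := prefix_ppl_palseg (_ : 4 * m + 1 <= 4 * m + 3) (@palseg_4n1_4n3 m).
split; lia.
Qed.

Lemma ppl_tm_le_upper_block m :
  [/\ ppl_tm (4 * m + 1) <= ppl_tm m.+1 + 2, ppl_tm (4 * m + 2) <= ppl_tm m.+1 + 2
    & ppl_tm (4 * m + 3) <= ppl_tm m.+1 + 1].
Proof.
(* The last palindrome [t[c, m+1)] of an optimal factorization lifts to
   [t[4c, 4m+4)], which is trimmed symmetrically. *)
have [c [cm fc hp]] := prefix_ppl_last tm (ltn0Sn m).
have [fc1 fc2 fc3] := ppl_tm_le_lower_block c.
have hp4 := palseg_morph hp.
have ppl_shrink k j : k + j = 4 -> 4 * c + k <= 4 * m + j ->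
    ppl_tm (4 * m + j) <= ppl_tm (4 * c + k) + 1.
  move=> kj ck; apply: prefix_ppl_palseg ck _.
  by rewrite (_ : 4 * m + j = 4 * m.+1 - k); [exact: palseg_shrink hp4 | lia].
have f3 := ppl_shrink 1 3 erefl; have f2 := ppl_shrink 2 2 erefl; have f1 := ppl_shrink 3 1 erefl.
have [lt_cm|ge_cm] := ltnP c m; last first.
  have c_m : c = m by lia.
  by subst c; case: (ppl_tm_le_lower_block m); split; lia.
split; lia.
Qed.

(* For [n = 4m + r], the two terms complete a lifted factorization of [t[0,4m)]
   by [r] letters, or trim a lifted one of [t[0,4m+4)] by [4 - r] letters. *)
Definition ppl_rec n :=
  minn (ppl_tm (n %/ 4) + nth 0 [:: 0; 1; 2; 2] (n %% 4))
       (ppl_tm (n %/ 4).+1 + nth 0 [:: 1; 2; 2; 1] (n %% 4)).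

Lemma ppl_rec_4adic m r : r < 4 -> ppl_rec (4 * m + r) =
  minn (ppl_tm m + nth 0 [:: 0; 1; 2; 2] r) (ppl_tm m.+1 + nth 0 [:: 1; 2; 2; 1] r).
Proof.
move=> r_lt4; rewrite /ppl_rec.
have -> : (4 * m + r) %/ 4 = m by lia.
by have -> : (4 * m + r) %% 4 = r by lia.
Qed.

Lemma ppl_rec_4n m : ppl_rec (4 * m) = minn (ppl_tm m) (ppl_tm m.+1 + 1).
Proof. by rewrite -[4 * m]addn0 ppl_rec_4adic // addn0. Qed.

Lemma ppl_rec_4n1 m : ppl_rec (4 * m + 1) = minn (ppl_tm m + 1) (ppl_tm m.+1 + 2).
Proof. exact: ppl_rec_4adic. Qed.

Lemma ppl_rec_4n2 m : ppl_rec (4 * m + 2) = minn (ppl_tm m + 2) (ppl_tm m.+1 + 2).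
Proof. exact: ppl_rec_4adic. Qed.

Lemma ppl_rec_4n3 m : ppl_rec (4 * m + 3) = minn (ppl_tm m + 2) (ppl_tm m.+1 + 1).
Proof. exact: ppl_rec_4adic. Qed.

Lemma ppl_tm_le_rec n : ppl_tm n <= ppl_rec n.
Proof.
rewrite (divn_eq n 4) mulnC; have : n %% 4 < 4 by rewrite ltn_mod.
set m := n %/ 4; have f0 := ppl_tm_4n_le m; have f0' := prefix_ppl_pred tm m.
have [f1 f2 f3] := ppl_tm_le_lower_block m; have [g1 g2 g3] := ppl_tm_le_upper_block m.
case: (n %% 4) => [|[|[|[|r]]]] // _.
- by rewrite addn0 ppl_rec_4n; lia.
- by rewrite ppl_rec_4n1; lia.
- by rewrite ppl_rec_4n2; lia.
- by rewrite ppl_rec_4n3; lia.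
Qed.

Lemma ppl_rec_succ a : ppl_rec a.+1 <= ppl_rec a + 1.
Proof.
rewrite (divn_eq a 4) mulnC; have : a %% 4 < 4 by rewrite ltn_mod.
set m := a %/ 4; have fS := prefix_pplS tm m.
case: (a %% 4) => [|[|[|[|r]]]] // _.
- by rewrite addn0 -[(4 * m).+1]addn1 ppl_rec_4n ppl_rec_4n1; lia.
- by rewrite -addnS ppl_rec_4n1 ppl_rec_4n2; lia.
- by rewrite -addnS ppl_rec_4n2 ppl_rec_4n3; lia.
- have -> : (4 * m + 3).+1 = 4 * m.+1 by lia.
  by rewrite ppl_rec_4n3 ppl_rec_4n; lia.
Qed.

Lemma ppl_rec_palseg3 a : palseg tm a (a + 3) -> ppl_rec (a + 3) <= ppl_rec a + 1.
Proof.
move=> hp; have : tm a = tm (a + 2) by apply: (palseg_sym hp); lia.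
rewrite (divn_eq a 4) mulnC; have : a %% 4 < 4 by rewrite ltn_mod.
set m := a %/ 4; have fS := prefix_pplS tm m; have fS' := prefix_pplS tm m.+1.
case: (a %% 4) => [|[|[|[|r]]]] // _.
- by rewrite addn0 tm_4n tm_4n2; case: (tm m).
- by rewrite -addnA tm_4n1 tm_4n3; case: (tm m).
- rewrite (_ : 4 * m + 2 + 3 = 4 * m.+1 + 1); last lia.
  by rewrite ppl_rec_4n2 ppl_rec_4n1; lia.
- rewrite (_ : 4 * m + 3 + 3 = 4 * m.+1 + 2); last lia.
  by rewrite ppl_rec_4n3 ppl_rec_4n2; lia.
Qed.

Lemma ppl_rec_palseg_centre0 x y s : s < 4 -> x < y -> palseg tm (4 * x + s) (4 * y - s) ->
  ppl_rec (4 * y - s) <= ppl_rec (4 * x + s) + 1.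
Proof.
move=> s_lt4 xy hp; have hxy := palseg_lift s_lt4 hp.
case: y xy hp hxy => [|y] // xy hp hxy.
have F1 : ppl_tm y.+1 <= ppl_tm x + 1 by apply: prefix_ppl_palseg => //; lia.
have F2 : ppl_tm y <= ppl_tm x.+1 + 1.
  have [y_x|ne_yx] := eqVneq y x; first by subst y; apply: prefix_ppl_pred.
  have := palseg_shrink (k := 1) hxy; rewrite addn1 subn1 /= => hp'.
  by apply: prefix_ppl_palseg hp'; lia.
have F3 := prefix_pplS tm y.
case: s s_lt4 hp => [|[|[|[|s]]]] // _ _.
- by rewrite subn0 addn0 !ppl_rec_4n; lia.
- rewrite (_ : 4 * y.+1 - 1 = 4 * y + 3); last lia.
  by rewrite ppl_rec_4n3 ppl_rec_4n1; lia.
- rewrite (_ : 4 * y.+1 - 2 = 4 * y + 2); last lia.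
  by rewrite !ppl_rec_4n2; lia.
- rewrite (_ : 4 * y.+1 - 3 = 4 * y + 1); last lia.
  by rewrite ppl_rec_4n1 ppl_rec_4n3; lia.
Qed.

(* For [h >= 7], with [i = p + 2], it would force [t[p, p+5)] to be a palindrome. *)
Lemma palseg_centre2_le6 i h : h <= 4 * i + 2 ->
  palseg tm (4 * i + 2 - h) (4 * i + 2 + h) -> h <= 6.
Proof.
move=> h_le hp; rewrite leqNgt; apply/negP => h_gt6.
have [p iE] : exists p, i = p.+2 by exists i.-2; lia.
subst i; have tm_p13 : tm p.+1 = tm p.+3.
  have := palseg_sym (q := 4 * p.+1 + 3) (q' := 4 * p.+3) hp.
  by rewrite tm_4n3 tm_4n; apply; lia.
have tm_p04 : tm p = tm (p + 4).
  have := palseg_sym (q := 4 * p + 3) (q' := 4 * (p + 4)) hp.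
  by rewrite tm_4n3 tm_4n; apply; lia.
case: (no_palseg5 (q := p)); apply: palseg_half => q pq q_half.
have [->|->] : q = p \/ q = p.+1 by lia.
  by rewrite tm_p04; congr tm; lia.
by rewrite tm_p13; congr tm; lia.
Qed.

Lemma ppl_rec_palseg_centre2 i h : 0 < h <= 4 * i + 2 ->
  palseg tm (4 * i + 2 - h) (4 * i + 2 + h) ->
  ppl_rec (4 * i + 2 + h) <= ppl_rec (4 * i + 2 - h) + 1.
Proof.
move=> /andP [h_gt0 h_le] hp; have := palseg_centre2_le6 h_le hp.
case: h h_gt0 h_le hp => [|[|[|h]]] // _ h_le hp h_le6.
- rewrite (_ : 4 * i + 2 - 1 = 4 * i + 1); last lia.
  rewrite (_ : 4 * i + 2 + 1 = 4 * i + 3); last lia.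
  by rewrite ppl_rec_4n1 ppl_rec_4n3; lia.
- rewrite (_ : 4 * i + 2 - 2 = 4 * i); last lia.
  rewrite (_ : 4 * i + 2 + 2 = 4 * i.+1); last lia.
  by rewrite !ppl_rec_4n; have := prefix_pplS tm i; lia.
case: i h_le hp => [|p] h_le hp; first lia.
have hp3 : palseg tm p (p + 3).
  apply: palseg_half => q pq q_half; have -> : q = p by lia.
  have := palseg_sym (q := 4 * p + 3) (q' := 4 * p.+2) hp.
  by rewrite tm_4n3 tm_4n (_ : p + (p + 3) - 1 - p = p.+2); [apply; lia | lia].
have F := prefix_ppl_palseg (leq_addr 3 p) hp3; rewrite addn3 in F.
have := prefix_pplS tm p; have := prefix_pplS tm p.+1; have := prefix_pplS tm p.+2.
case: h h_le hp h_le6 => [|[|[|[|h]]]] // h_le hp _.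
- rewrite (_ : 4 * p.+1 + 2 - 3 = 4 * p + 3); last lia.
  rewrite (_ : 4 * p.+1 + 2 + 3 = 4 * p.+2 + 1); last lia.
  by rewrite ppl_rec_4n3 ppl_rec_4n1; lia.
- rewrite (_ : 4 * p.+1 + 2 - 4 = 4 * p + 2); last lia.
  rewrite (_ : 4 * p.+1 + 2 + 4 = 4 * p.+2 + 2); last lia.
  by rewrite !ppl_rec_4n2; lia.
- rewrite (_ : 4 * p.+1 + 2 - 5 = 4 * p + 1); last lia.
  rewrite (_ : 4 * p.+1 + 2 + 5 = 4 * p.+2 + 3); last lia.
  by rewrite ppl_rec_4n1 ppl_rec_4n3; lia.
- rewrite (_ : 4 * p.+1 + 2 - 6 = 4 * p); last lia.
  rewrite (_ : 4 * p.+1 + 2 + 6 = 4 * p.+3); last lia.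
  by rewrite !ppl_rec_4n; lia.
Qed.

Lemma ppl_rec_palseg_even a h : 0 < h -> palseg tm a (a + 2 * h) ->
  ppl_rec (a + 2 * h) <= ppl_rec a + 1.
Proof.
move=> h_gt0 hp; have centre : tm (a + h - 1) = tm (a + h) by apply: (palseg_sym hp); lia.
have [i [j [ahE j_lt4]]] : exists i j, a + h = 4 * i + j /\ j < 4.
  by exists ((a + h) %/ 4), ((a + h) %% 4); lia.
case: j j_lt4 ahE => [|[|[|[|j]]]] // _ ahE.
- set s := 4 * ((h + 3) %/ 4) - h.
  have := @ppl_rec_palseg_centre0 (i - (h + 3) %/ 4) (i + (h + 3) %/ 4) s.
  rewrite (_ : 4 * (i - (h + 3) %/ 4) + s = a); last lia.
  rewrite (_ : 4 * (i + (h + 3) %/ 4) - s = a + 2 * h); last lia.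
  by move=> edge; apply: edge hp; lia.
- move: centre; rewrite ahE (_ : 4 * i + 1 - 1 = 4 * i); last lia.
  by rewrite tm_4n tm_4n1; case: (tm i).
- have := @ppl_rec_palseg_centre2 i h.
  rewrite (_ : 4 * i + 2 - h = a); last lia.
  rewrite (_ : 4 * i + 2 + h = a + 2 * h); last lia.
  by move=> edge; apply: edge hp; lia.
- move: centre; rewrite ahE (_ : 4 * i + 3 - 1 = 4 * i + 2); last lia.
  by rewrite tm_4n2 tm_4n3; case: (tm i).
Qed.

Lemma ppl_rec_palseg a b : a < b -> palseg tm a b -> ppl_rec b <= ppl_rec a + 1.
Proof.
move=> ab hp; have [h [bE|bE]] : exists h, b = a + 2 * h \/ b = a + (2 * h).+1.
  by exists ((b - a) %/ 2); lia.
  by subst b; apply: ppl_rec_palseg_even hp; lia.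
case: h bE => [|[|h]] bE; subst b.
- by rewrite muln0 addn1; apply: ppl_rec_succ.
- exact: ppl_rec_palseg3.
case: (no_palseg5 (q := a + h)).
by rewrite (_ : a + h + 5 = a + (2 * h.+2).+1 - h); [apply: palseg_shrink | lia].
Qed.

Lemma ppl_rec_palsplit k a b : palsplit tm k a b -> ppl_rec b <= ppl_rec a + k.
Proof.
elim: k a => [|k IH] a /=; first by move->; lia.
by case=> c [ac cb hp hr]; have := ppl_rec_palseg ac hp; have := IH _ hr; lia.
Qed.

Theorem ppl_tmE n : ppl_tm n = ppl_rec n.
Proof.
apply/eqP; rewrite eqn_leq ppl_tm_le_rec /=.
have := ppl_rec_palsplit (prefix_ppl_split tm n).
by rewrite -(muln0 4) ppl_rec_4n (prefix_ppl0 tm); lia.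
Qed.

Lemma ppl_tm_4n m : ppl_tm (4 * m) = minn (ppl_tm m) (ppl_tm m.+1 + 1).
Proof. by rewrite ppl_tmE ppl_rec_4n. Qed.

Lemma ppl_tm_4n1 m : ppl_tm (4 * m + 1) = minn (ppl_tm m + 1) (ppl_tm m.+1 + 2).
Proof. by rewrite ppl_tmE ppl_rec_4n1. Qed.

Lemma ppl_tm_4n2 m : ppl_tm (4 * m + 2) = minn (ppl_tm m + 2) (ppl_tm m.+1 + 2).
Proof. by rewrite ppl_tmE ppl_rec_4n2. Qed.

Lemma ppl_tm_4n3 m : ppl_tm (4 * m + 3) = minn (ppl_tm m + 2) (ppl_tm m.+1 + 1).
Proof. by rewrite ppl_tmE ppl_rec_4n3. Qed.

Lemma ppl_tm_pair_le k n : n < 4 ^ k -> ppl_tm n + ppl_tm n.+1 <= 3 * k + 1.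
Proof.
elim: k n => [|k IH] n n_lt.
  by move: n_lt; rewrite expn0 ltnS leqn0 => /eqP ->; have := prefix_pplS tm 0; rewrite prefix_ppl0.
have IHm : ppl_tm (n %/ 4) + ppl_tm (n %/ 4).+1 <= 3 * k + 1.
  by apply: IH; rewrite expnS in n_lt; lia.
have r_lt4 : n %% 4 < 4 by rewrite ltn_mod.
rewrite (divn_eq n 4) mulnC; set m := n %/ 4 in IHm *.
have e0 := ppl_tm_4n m; have e1 := ppl_tm_4n1 m; have e2 := ppl_tm_4n2 m.
have e3 := ppl_tm_4n3 m; have e4 := ppl_tm_4n m.+1.
case: (n %% 4) r_lt4 => [|[|[|[|r]]]] // _.
- by rewrite addn0 -[(4 * m).+1]addn1; lia.
- by rewrite -addnS; lia.
- by rewrite -addnS; lia.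
- by rewrite (_ : (4 * m + 3).+1 = 4 * m.+1); lia.
Qed.

Lemma ppl_tm_double_le k n : n < 4 ^ k -> 2 * ppl_tm n <= 3 * k + 2.
Proof. by move=> n_lt; have := ppl_tm_pair_le n_lt; have := prefix_ppl_pred tm n; lia. Qed.

Lemma ppl_tm_pow4_le k : ppl_tm (4 ^ k) <= 1.
Proof.
elim: k => [|k IH]; first by have := prefix_pplS tm 0; rewrite prefix_ppl0.
by rewrite expnS ppl_tm_4n; lia.
Qed.

Fixpoint peak k := if k is k'.+1 then 16 * peak k' + 6 else 2.

Lemma peak_gt k : k.+1 < peak k.
Proof. by elim: k => //= k IH; lia. Qed.

Lemma peak_lt k : peak k < 4 ^ (2 * k + 1).
Proof.
elim: k => //= k IH.
by rewrite (_ : 2 * k.+1 + 1 = (2 * k + 1).+2) ?expnS; lia.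
Qed.

(* [16 m + 6 = 4 (4 m + 1) + 2]: unfolding the recursion twice adds 3 to
   the minimum of [PPL_t] at [m] and [m + 1]. *)
Lemma ppl_tm_peak k : 3 * k + 2 <= ppl_tm (peak k) /\ 3 * k + 2 <= ppl_tm (peak k).+1.
Proof.
elim: k => [|k [IH IH']] /=.
  have := ppl_tm_4n1 0; have := ppl_tm_4n2 0; have := ppl_tm_4n3 0.
  by rewrite muln0 !add0n (prefix_ppl0 tm); lia.
set m := peak k in IH IH' *.
have a1 := ppl_tm_4n1 m; have a2 := ppl_tm_4n2 m.
have b2 := ppl_tm_4n2 (4 * m + 1); have b3 := ppl_tm_4n3 (4 * m + 1).
rewrite -addnS in b2 b3.
have -> : 16 * m + 6 = 4 * (4 * m + 1) + 2 by lia.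
have -> : (4 * (4 * m + 1) + 2).+1 = 4 * (4 * m + 1) + 3 by lia.
lia.
Qed.

Open Scope R_scope.

Lemma INR_pow4 k : INR (4 ^ k)%N = 4 ^ k.
Proof.
elim: k => [|k IH] //; rewrite expnS [in RHS]/= -IH.
rewrite (_ : (4 * 4 ^ k)%N = (4 * 4 ^ k)%coq_nat) // mult_INR.
by congr Rmult; rewrite /=; lra.
Qed.

Lemma ln2_gt0 : 0 < ln 2.
Proof. by rewrite -ln_1; apply: ln_increasing; lra. Qed.

Lemma ln_INR_pow4 k : ln (INR (4 ^ k)%N) = 2 * INR k * ln 2.
Proof.
rewrite INR_pow4 ln_pow; last lra.
by rewrite (_ : 4 = 2 * 2) ?ln_mult; lra.
Qed.

Lemma ln_INR_gt0 n : (2 <= n)%N -> 0 < ln (INR n).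
Proof.
move/leP/le_INR => n_ge2; rewrite -ln_1.
by apply: ln_increasing; rewrite /= in n_ge2; lra.
Qed.

Lemma inv_ln_INR_lt eps : 0 < eps ->
  exists N, forall n, (N <= n)%N -> 0 < ln (INR n) /\ / ln (INR n) < eps.
Proof.
move=> eps_gt0; have [N N_gt] := INR_archimed 1 (exp (/ eps)) Rlt_0_1.
exists N.+2 => n Nn; have /le_INR N_le : (N <= n)%coq_nat by apply/leP; lia.
split; first by apply: ln_INR_gt0; lia.
rewrite -(Rinv_inv eps); apply: Rinv_lt_contravar.
  by apply: Rmult_lt_0_compat; [apply: Rinv_0_lt_compat | apply: ln_INR_gt0; lia].
rewrite -{1}(ln_exp (/ eps)); apply: ln_increasing; [exact: exp_pos | lra].
Qed.

Definition ppl_ratio n := INR (PPL_t n) / ln (INR n).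

Lemma PPL_t_le_log n : (1 <= n)%N -> INR (PPL_t n) <= 3 / (4 * ln 2) * ln (INR n) + 5 / 2.
Proof.
move=> n_ge1; set k := trunc_log 4 n; have ln2 := ln2_gt0.
have n_lt : (n < 4 ^ k.+1)%N by apply: trunc_log_ltn.
have /le_INR bound : (2 * PPL_t n <= 3 * k + 5)%coq_nat.
  by rewrite PPL_tE; have := ppl_tm_double_le n_lt; lia.
rewrite mult_INR plus_INR mult_INR /= in bound.
have /le_INR pow_le : (4 ^ k <= n)%coq_nat by apply/leP/trunc_logP.
have ln_ge : 2 * INR k * ln 2 <= ln (INR n).
  by rewrite -ln_INR_pow4; apply: ln_le => //; rewrite INR_pow4; apply: pow_lt; lra.
have : 3 / 2 * INR k <= 3 / (4 * ln 2) * ln (INR n).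
  rewrite (_ : 3 / 2 * INR k = 3 / (4 * ln 2) * (2 * INR k * ln 2)); last by field; lra.
  by apply: Rmult_le_compat_l => //; apply: Rlt_le; apply: Rdiv_lt_0_compat; lra.
lra.
Qed.

Lemma ppl_ratio_le n : (2 <= n)%N ->
  ppl_ratio n <= 3 / (4 * ln 2) + 5 / 2 * / ln (INR n).
Proof.
move=> n_ge2; have ln_gt0 := ln_INR_gt0 n_ge2; have ln2 := ln2_gt0.
have le_log := PPL_t_le_log (ltnW n_ge2).
rewrite /ppl_ratio (_ : 3 / (4 * ln 2) + 5 / 2 * / ln (INR n) =
  (3 / (4 * ln 2) * ln (INR n) + 5 / 2) / ln (INR n)); last by field; repeat split; lra.
by apply: Rmult_le_compat_r => //; apply/Rlt_le/Rinv_0_lt_compat.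
Qed.

Lemma ppl_ratio_peak k : 3 / (4 * ln 2) <= ppl_ratio (peak k).
Proof.
have ln2 := ln2_gt0; have peak_ge2 : (2 <= peak k)%N by have := peak_gt k; lia.
have ln_gt0 := ln_INR_gt0 peak_ge2.
have /le_INR ppl_ge : (3 * k + 2 <= PPL_t (peak k))%coq_nat.
  by rewrite PPL_tE; have [] := ppl_tm_peak k; lia.
rewrite plus_INR mult_INR /= in ppl_ge.
have ln_le : ln (INR (peak k)) <= 2 * INR (2 * k + 1)%coq_nat * ln 2.
  rewrite -ln_INR_pow4; apply: ln_le; first by apply: (lt_INR 0); apply/ltP; lia.
  by apply: le_INR; apply/leP/ltnW/peak_lt.
rewrite plus_INR mult_INR /= in ln_le.
rewrite /ppl_ratio; set L := ln (INR (peak k)) in ln_gt0 ln_le *.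
apply: (Rmult_le_reg_r L) => //.
rewrite (_ : INR (PPL_t (peak k)) / L * L = INR (PPL_t (peak k))); last by field; lra.
have : 3 / (4 * ln 2) * L <= 3 / (4 * ln 2) * (2 * ((1 + 1) * INR k + 1) * ln 2).
  by apply: Rmult_le_compat_l => //; apply: Rlt_le; apply: Rdiv_lt_0_compat; lra.
by rewrite (_ : 3 / (4 * ln 2) * (2 * ((1 + 1) * INR k + 1) * ln 2) = 3 * INR k + 3 / 2);
  [lra | field; lra].
Qed.

Lemma ppl_ratio_pow4 k : (0 < k)%N -> ppl_ratio (4 ^ k) <= / ln (INR (4 ^ k)%N).
Proof.
move=> k_gt0; have ln_gt0 : 0 < ln (INR (4 ^ k)%N).
  by apply: ln_INR_gt0; rewrite (leq_trans _ (leq_pexp2l _ k_gt0)).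
have /le_INR ppl_le : (PPL_t (4 ^ k) <= 1)%coq_nat by rewrite PPL_tE; apply/leP/ppl_tm_pow4_le.
rewrite /ppl_ratio /Rdiv -[X in _ <= X]Rmult_1_l.
by apply: Rmult_le_compat_r; [apply: Rlt_le; apply: Rinv_0_lt_compat | exact: ppl_le].
Qed.

Lemma is_LimSup_ppl_ratio : is_LimSup_seq ppl_ratio (3 / (4 * ln 2)).
Proof.
move=> eps; have eps_gt0 := cond_pos eps; split.
  move=> N; exists (peak N); split; last by have := ppl_ratio_peak N; lra.
  by apply/leP; have := peak_gt N; lia.
have eps'_gt0 : 0 < 2 / 5 * eps by lra.
have [N small] := inv_ln_INR_lt eps'_gt0.
exists N.+2 => n /leP Nn; have [_ inv_lt] : 0 < ln (INR n) /\ / ln (INR n) < 2 / 5 * eps.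
  by apply: small; lia.
have n_ge2 : (2 <= n)%N by lia.
by have := ppl_ratio_le n_ge2; lra.
Qed.

Lemma is_LimInf_ppl_ratio : is_LimInf_seq ppl_ratio 0.
Proof.
move=> eps; have eps_gt0 := cond_pos eps; split.
  move=> N; have [M small] := inv_ln_INR_lt eps_gt0.
  have pow_ge : (N + M < 4 ^ (N + M).+1)%N.
    by apply: (ltn_trans (ltnSn _)); apply: ltn_expl.
  exists (4 ^ (N + M).+1)%N; split; first by apply/leP; lia.
  have [_ inv_lt] := small (4 ^ (N + M).+1)%N (leq_trans (leq_addl N M) (ltnW pow_ge)).
  by have := ppl_ratio_pow4 (ltn0Sn (N + M)); lra.
exists 2%N => n /leP n_ge2; rewrite /ppl_ratio /Rdiv.
suff : 0 <= INR (PPL_t n) * / ln (INR n) by lra.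
by apply: Rmult_le_pos; [exact: pos_INR | apply/Rlt_le/Rinv_0_lt_compat/ln_INR_gt0].
Qed.

Theorem corollary16 :
  LimSup_seq (fun n : nat => INR (PPL_t n) / ln (INR n)) = Finite (3 / (4 * ln 2))
  /\ LimInf_seq (fun n : nat => INR (PPL_t n) / ln (INR n)) = Finite 0.
Proof.
split; [apply: is_LimSup_seq_unique; exact: is_LimSup_ppl_ratio
       | apply: is_LimInf_seq_unique; exact: is_LimInf_ppl_ratio].
Qed.
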